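(* Let $(X,d_X)$ be a metric space and $p,q\in[1,\infty)$. Then for every $m,n\in\mathbb N$, $k\in\{1,\ldots,n\}$ and $f:\mathbb Z_{8m}^n\to X$, $$\sum_{\varepsilon\in\{-1,1\}^n}\sum_{x\in\mathbb Z_{8m}^n}d_X(f(x+2\varepsilon),f(x))^p\lesssim_p\Big(\mathrm{BMW}_q^{\lfloor n/k\rfloor+1}(X;p)\Big)^p\frac{(n/k)^{p/q}}{\binom nk}\sum_{\substack{S\subset\{1,\ldots,n\}\\|S|=k}}\sum_{\varepsilon\in\{-1,1\}^n}\sum_{x\in\mathbb Z_{8m}^n}d_X(f(x+\varepsilon_S),f(x))^p.$$
   Context: $\mathbb Z_{8m}^n=(\mathbb Z/8m\mathbb Z)^n$, integer vectors added modulo $8m$; $\varepsilon_S=\sum_{j\in S}\varepsilon_je_j$. For $N\in\mathbb N$ and $j\le N$, $\sigma^j\in\{-1,1\}^N$ has $-1$ in coordinate $j$ and $1$ elsewhere; $\sigma^j\varepsilon$ denotes coordinatewise product (flipping the $j$th sign). $\mathrm{BMW}_q^N(X;p)$ is the infimum of $B\in[1,\infty)$ such that every $h:\{-1,1\}^N\to X$ satisfies $\sum_{\varepsilon}d_X(h(\varepsilon),h(-\varepsilon))^p\le B^pN^{p/q-1}\sum_{j=1}^N\sum_{\varepsilon}d_X(h(\sigma^j\varepsilon),h(\varepsilon))^p$ (sums over $\varepsilon\in\{-1,1\}^N$). $a\lesssim_p b$ means $a\le c^pb$ for a universal constant $c$. *)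

From Stdlib Require Import Reals.
From mathcomp Require Import all_boot all_order all_algebra.
Set Implicit Arguments. Unset Strict Implicit. Unset Printing Implicit Defensive.

Definition rpow (t p : R) : R := if Rle_dec t 0 then R0 else Rpower t p.

Notation "\rsum_ ( i : T ) F" := (\big[Rplus/R0]_(i : T) F)
  (at level 41, F at level 41, i at level 50).
Notation "\rsum_ ( i : T | P ) F" := (\big[Rplus/R0]_(i : T | P) F)
  (at level 41, F at level 41, i at level 50).

(* sign vectors {-1,1}^N, encoded as boolean functions (true = +1, false = -1) *)
Definition signs (N : nat) := {ffun 'I_N -> bool}.
Definition sneg (N : nat) (e : signs N) : signs N := [ffun i => ~~ e i].
Definition sflip (N : nat) (j : 'I_N) (e : signs N) : signs N :=
  [ffun i => if i == j then ~~ e i else e i].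

(* B is admissible in the definition of BMW_q^N(X;p):
   B >= 1 and every h : {-1,1}^N -> X satisfies the inequality.
   BMW_q^N(X;p) is the infimum of the admissible B. *)
Definition BMW_admissible (X : Metric_Space) (q p : R) (N : nat) (B : R) : Prop :=
  Rle 1 B /\
  forall h : signs N -> Base X,
    Rle (\rsum_(e : signs N) rpow (dist X (h e) (h (sneg e))) p)
        (Rmult (Rmult (rpow B p) (Rpower (INR N) (Rminus (Rdiv p q) 1)))
           (\rsum_(j : 'I_N) \rsum_(e : signs N) rpow (dist X (h (sflip j e)) (h e)) p)).

Definition zsign (M : nat) (b : bool) : 'Z_M := if b then 1%R else (-1)%R.

Definition two_eps (M n : nat) (e : signs n) : 'rV['Z_M]_n :=
  \row_i (zsign M (e i) *+ 2)%R.
Definition eps_S (M n : nat) (S : {set 'I_n}) (e : signs n) : 'rV['Z_M]_n :=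
  \row_i (if i \in S then zsign M (e i) else 0%R).

(* Split the n coordinates into N = n/k + 1 consecutive blocks of length at most
   k. For fixed x and eps, apply the BMW inequality on {-1,1}^N to
   delta |-> f(x + sum_i eps_i delta_(block i) e_i) and sum over x and eps: the
   diagonal side becomes the left-hand side of the theorem, while flipping
   delta_j moves by 2 eps restricted to block j. By the triangle inequality this
   costs at most two eps_S-increments for any k-set S containing the block.
   Averaging over all relabellings of the coordinates turns the blocks' windows
   into uniformly distributed k-sets, which yields the factor 1 / C(n, k), and
   N <= 2n/k makes the constant 2 * 2 * 2 = 8. *)

From Stdlib Require Import Reals Lra.
From HB Require Import structures.
From mathcomp Require Import all_boot all_algebra all_fingroup zify.

Set Implicit Arguments.
Unset Strict Implicit.
Unset Printing Implicit Defensive.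

Import GRing.Theory.

Open Scope R_scope.

HB.instance Definition _ := Monoid.isComLaw.Build R R0 Rplus
  (fun x y z => esym (Rplus_assoc x y z)) Rplus_comm Rplus_0_l.

Lemma Rsum_le (I : Type) (r : seq I) (P : pred I) (F G : I -> R) :
  (forall i, P i -> F i <= G i) ->
  \big[Rplus/R0]_(i <- r | P i) F i <= \big[Rplus/R0]_(i <- r | P i) G i.
Proof. by move=> FG; apply: big_ind2 => // *; lra. Qed.

Lemma Rsum_ge0 (I : Type) (r : seq I) (P : pred I) (F : I -> R) :
  (forall i, P i -> 0 <= F i) -> 0 <= \big[Rplus/R0]_(i <- r | P i) F i.
Proof. by move=> F0; apply: big_ind => // *; lra. Qed.

Lemma Rmult_sumr (I : Type) (r : seq I) (P : pred I) (F : I -> R) c :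
  c * \big[Rplus/R0]_(i <- r | P i) F i = \big[Rplus/R0]_(i <- r | P i) (c * F i).
Proof. by apply: (big_rec2 (fun a b => c * a = b)) => [|i a b _ <-]; ring. Qed.

Lemma Rsum_const (T : finType) c : \big[Rplus/R0]_(i : T) c = INR #|T| * c.
Proof. by rewrite big_const; elim: #|_| => [|m IHm]; rewrite ?iterS ?IHm ?S_INR /=; ring. Qed.

Lemma Rsum_const_pred (T : finType) (P : pred T) c :
  \big[Rplus/R0]_(i : T | P i) c = INR #|[set i | P i]| * c.
Proof.
rewrite cardsE (@big_const _ _ _ _ [pred i | P i]).
by elim: #|_| => [|m IHm]; rewrite ?iterS ?IHm ?S_INR /=; ring.
Qed.

Lemma Rsum_translate (V : finZmodType) (G : V -> R) (a : V) :
  \big[Rplus/R0]_(x : V) G (x + a)%R = \big[Rplus/R0]_(x : V) G x.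
Proof. by rewrite [RHS](reindex_inj (addIr a)). Qed.

Lemma Rsum_involutive (T : finType) (h : T -> T) (G : T -> R) :
  involutive h -> \big[Rplus/R0]_(x : T) G (h x) = \big[Rplus/R0]_(x : T) G x.
Proof. by move=> hK; rewrite [RHS](reindex_inj (inv_inj hK)). Qed.

Lemma Rpower_gt0 a b : 0 < Rpower a b.
Proof. exact: exp_pos. Qed.

Lemma rpow_ge0 t p : 0 <= rpow t p.
Proof. by rewrite /rpow; case: Rle_dec => ?; [exact: Rle_refl | apply/Rlt_le/Rpower_gt0]. Qed.

Lemma rpowE t p : 0 < t -> rpow t p = Rpower t p.
Proof. by move=> t_gt0; rewrite /rpow; case: Rle_dec => // ?; lra. Qed.

Lemma rpow0 p : rpow 0 p = 0.
Proof. by rewrite /rpow; case: Rle_dec => // ?; lra. Qed.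

Lemma rpow_le s t p : 0 <= p -> 0 <= s <= t -> rpow s p <= rpow t p.
Proof.
move=> p_ge0 st; rewrite {1}/rpow; case: Rle_dec => s_le0; first exact: rpow_ge0.
by rewrite rpowE; [apply: Rle_Rpower_l; lra | lra].
Qed.

Lemma rpow_mul s t p : 0 <= s -> 0 <= t -> rpow (s * t) p = rpow s p * rpow t p.
Proof.
move=> s_ge0 t_ge0.
have [s0|s_gt0] : s = 0 \/ 0 < s by lra.
  by rewrite s0 !Rmult_0_l rpow0 Rmult_0_l.
have [t0|t_gt0] : t = 0 \/ 0 < t by lra.
  by rewrite t0 !Rmult_0_r rpow0 Rmult_0_r.
by rewrite !rpowE ?Rpower_mult_distr //; apply: Rmult_lt_0_compat.
Qed.

(* [(s + t)^p <= (2 max(s, t))^p = 2^p max(s^p, t^p)] *)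
Lemma rpow_add_le s t p : 0 <= p -> 0 <= s -> 0 <= t ->
  rpow (s + t) p <= rpow 2 p * (rpow s p + rpow t p).
Proof.
move=> p_ge0 s_ge0 t_ge0.
have le_max := Rmax_l s t; have ge_max := Rmax_r s t.
apply: (Rle_trans _ (rpow (2 * Rmax s t) p)); first by apply: rpow_le; lra.
rewrite rpow_mul; [|lra|lra]; apply: Rmult_le_compat_l; first exact: rpow_ge0.
have := rpow_ge0 s p; have := rpow_ge0 t p.
by rewrite /Rmax; case: Rle_dec => ?; lra.
Qed.

Lemma zsign_negb M b : zsign M (~~ b) = (- zsign M b)%R.
Proof. by case: b; rewrite /zsign /= ?opprK. Qed.

Section Increments.
Variables (X : Metric_Space) (p : R) (M n : nat) (f : 'rV['Z_M]_n -> Base X).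
Local Notation V := 'rV['Z_M]_n.

Definition increment (a : V) : R :=
  \big[Rplus/R0]_(x : V) rpow (dist X (f (x + a)%R) (f x)) p.

Lemma increment_ge0 a : 0 <= increment a.
Proof. by apply: Rsum_ge0 => x _; apply: rpow_ge0. Qed.

Lemma increment_add a b : 0 <= p ->
  increment (a + b) <= rpow 2 p * (increment a + increment b).
Proof.
move=> p_ge0; rewrite /increment.
rewrite -(Rsum_translate (fun x => rpow (dist X (f (x + b)%R) (f x)) p) a).
rewrite -big_split Rmult_sumr; apply: Rsum_le => x _ /=; rewrite Rplus_comm -addrA.
have d_ge0 y z : 0 <= dist X y z by apply/Rge_le/dist_pos.
apply: Rle_trans (@rpow_add_le _ _ _ p_ge0 (d_ge0 _ _) (d_ge0 _ _)).
by apply: rpow_le => //; split; [|apply: dist_tri].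
Qed.

Definition set_increment (S : {set 'I_n}) : R :=
  \big[Rplus/R0]_(e : signs n) increment (eps_S M S e).

Lemma set_increment_ge0 S : 0 <= set_increment S.
Proof. by apply: Rsum_ge0 => e _; apply: increment_ge0. Qed.

End Increments.

Section Twist.
Variables (X : Metric_Space) (p : R) (M n N : nat) (f : 'rV['Z_M]_n -> Base X).
Variable block : 'I_n -> 'I_N.
Local Notation V := 'rV['Z_M]_n.

Definition twist (e : signs n) (d : signs N) : signs n :=
  [ffun i => e i == d (block i)].

Definition twist_vec (e : signs n) (d : signs N) : V := \row_i zsign M (twist e d i).

Definition block_two_eps (j : 'I_N) (e : signs n) : V :=
  \row_i (if block i == j then zsign M (e i) *+ 2 else 0)%R.

Lemma twistK d : involutive (twist^~ d).
Proof. by move=> e; apply/ffunP => i; rewrite !ffunE; case: (e i); case: (d _). Qed.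

Lemma twist_vec_sneg e d : twist_vec e (sneg d) = (- twist_vec e d)%R.
Proof.
apply/rowP => i; rewrite !mxE !ffunE -zsign_negb.
by congr zsign; case: (e i); case: (d _).
Qed.

Lemma two_eps_twist e d : two_eps M (twist e d) = (twist_vec e d + twist_vec e d)%R.
Proof. by apply/rowP => i; rewrite !mxE mulr2n. Qed.

Lemma twist_vec_sflip e d j :
  twist_vec e (sflip j d) = (twist_vec e d - block_two_eps j (twist e d))%R.
Proof.
apply/rowP => i; rewrite !mxE !ffunE.
have [->|_] := eqVneq (block i) j; last by rewrite subr0.
have -> : (e i == ~~ d j) = ~~ (e i == d j) by case: (e i); case: (d j).
by rewrite zsign_negb mulr2n opprD addrA subrr sub0r.
Qed.

Lemma sum_twist_sneg d :
  \big[Rplus/R0]_(e : signs n) \big[Rplus/R0]_(x : V)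
     rpow (dist X (f (x + twist_vec e d)%R) (f (x + twist_vec e (sneg d))%R)) p
  = \big[Rplus/R0]_(e : signs n) increment p f (two_eps M e).
Proof.
rewrite -(Rsum_involutive (fun e => increment p f (two_eps M e)) (twistK d)).
apply: eq_bigr => e _; rewrite two_eps_twist /increment.
rewrite -(Rsum_translate (fun x => rpow (dist X (f (x + _)%R) (f x)) p) (- twist_vec e d)%R).
by apply: eq_bigr => x _; rewrite twist_vec_sneg addrA subrK.
Qed.

Lemma sum_twist_sflip j d :
  \big[Rplus/R0]_(e : signs n) \big[Rplus/R0]_(x : V)
     rpow (dist X (f (x + twist_vec e (sflip j d))%R) (f (x + twist_vec e d)%R)) p
  = \big[Rplus/R0]_(e : signs n) increment p f (block_two_eps j e).
Proof.
rewrite -(Rsum_involutive (fun e => increment p f (block_two_eps j e)) (twistK d)).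
apply: eq_bigr => e _; rewrite /increment.
rewrite -(Rsum_translate (fun x => rpow (dist X (f (x + _)%R) (f x)) p)
            (twist_vec e d - block_two_eps j (twist e d))%R).
apply: eq_bigr => x _; rewrite twist_vec_sflip dist_sym.
by rewrite addrA subrK.
Qed.

(* [block_two_eps j e] is [eps_S e + eps_S e'] for [e'] equal to [e] flipped off
   the block: off the block the two terms cancel. *)
Lemma sum_block_two_eps_increment_le j (S : {set 'I_n}) : 0 <= p ->
  (forall i, block i = j -> i \in S) ->
  \big[Rplus/R0]_(e : signs n) increment p f (block_two_eps j e) <=
  2 * rpow 2 p * set_increment p f S.
Proof.
move=> p_ge0 blockS.
pose flip (e : signs n) : signs n := [ffun i => if block i == j then e i else ~~ e i].
have flipK : involutive flip.
  by move=> e; apply/ffunP => i; rewrite !ffunE; case: eqP; rewrite ?negbK.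
have split_eps e : block_two_eps j e = (eps_S M S e + eps_S M S (flip e))%R.
  apply/rowP => i; rewrite !mxE !ffunE.
  have [/blockS -> | _] := eqVneq (block i) j; first by rewrite mulr2n.
  by case: ifP; rewrite ?addr0 // zsign_negb subrr.
apply: (Rle_trans _ (\big[Rplus/R0]_(e : signs n)
   (rpow 2 p * (increment p f (eps_S M S e) + increment p f (eps_S M S (flip e)))))).
  by apply: Rsum_le => e _; rewrite split_eps; apply: increment_add.
rewrite -Rmult_sumr big_split /=.
rewrite (Rsum_involutive (fun e => increment p f (eps_S M S e)) flipK).
by right; rewrite -/(set_increment p f S); ring.
Qed.

Variable K : R.
Hypothesis bmw : forall h : signs N -> Base X,
  \big[Rplus/R0]_(d : signs N) rpow (dist X (h d) (h (sneg d))) p <=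
  K * \big[Rplus/R0]_(j : 'I_N) \big[Rplus/R0]_(d : signs N)
        rpow (dist X (h (sflip j d)) (h d)) p.

(* Sum the BMW inequality for [h d := f (x + twist_vec e d)] over [x] and [e]. *)
Lemma sum_two_eps_increment_le :
  \big[Rplus/R0]_(e : signs n) increment p f (two_eps M e) <=
  K * \big[Rplus/R0]_(j : 'I_N) \big[Rplus/R0]_(e : signs n) increment p f (block_two_eps j e).
Proof.
have card_gt0 : 0 < INR #|signs N|.
  by apply/lt_0_INR/ltP/card_gt0P; exists [ffun => true].
apply: (Rmult_le_reg_l _ _ _ card_gt0).
rewrite -Rsum_const -(eq_bigr _ (fun d _ => sum_twist_sneg d)).
rewrite exchange_big (eq_bigr _ (fun e _ => exchange_big _ _ _ _ _ _)) /=.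
apply: (Rle_trans _ (K * \big[Rplus/R0]_(e : signs n) \big[Rplus/R0]_(x : V)
   \big[Rplus/R0]_(j : 'I_N) \big[Rplus/R0]_(d : signs N)
      rpow (dist X (f (x + twist_vec e (sflip j d))%R) (f (x + twist_vec e d)%R)) p)).
  rewrite Rmult_sumr; apply: Rsum_le => e _; rewrite Rmult_sumr; apply: Rsum_le => x _.
  exact: (bmw (fun d => f (x + twist_vec e d)%R)).
right; rewrite [RHS]Rmult_comm Rmult_assoc; congr (K * _).
rewrite (eq_bigr _ (fun e _ => exchange_big _ _ _ _ _ _)) exchange_big /=.
rewrite (eq_bigr _ (fun j _ => eq_bigr _ (fun e _ => exchange_big _ _ _ _ _ _))) /=.
rewrite (eq_bigr _ (fun j _ => exchange_big _ _ _ _ _ _)) /=.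
rewrite (eq_bigr _ (fun j _ => eq_bigr _ (fun d _ => sum_twist_sflip j d))).
by rewrite (eq_bigr _ (fun j _ => Rsum_const _ _)) Rmult_comm Rmult_sumr.
Qed.

End Twist.

Lemma card_interval n a k :
  (a + k <= n)%N -> #|[set i : 'I_n | (a <= i < a + k)%N]| = k.
Proof.
move=> akn; rewrite cardsE cardE /enum_mem size_filter /index_enum !unlock /=.
rewrite -(count_map val (fun x => a <= x < a + k)%N) val_ord_enum.
rewrite -(subnKC akn) iotaD iotaD !count_cat add0n.
rewrite (@eq_in_count _ _ pred0) ?count_pred0; last first.
  by move=> x; rewrite mem_iota => /andP[_ xa] /=; rewrite leqNgt xa.
rewrite (@eq_in_count _ _ predT) ?count_predT ?size_iota; last first.
  by move=> x; rewrite mem_iota.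
rewrite (@eq_in_count _ _ pred0) ?count_pred0 ?addn0 //.
by move=> x; rewrite mem_iota => /andP[xak _] /=; rewrite ltnNge xak andbF.
Qed.

Section Blocks.
Variables n k : nat.
Hypotheses (k_gt0 : (0 < k)%N) (k_le_n : (k <= n)%N).

Definition block_count := (n %/ k + 1)%N.

Lemma block_of_subproof (i : 'I_n) : (i %/ k < block_count)%N.
Proof. by rewrite /block_count addn1 ltnS leq_div2r // ltnW. Qed.

Definition block_of (i : 'I_n) : 'I_block_count := Ordinal (block_of_subproof i).

(* The last window is shifted left so that it stays inside {0, ..., n - 1}. *)
Definition window (j : 'I_block_count) : {set 'I_n} :=
  [set i : 'I_n | (minn (j * k) (n - k) <= i < minn (j * k) (n - k) + k)%N].

Lemma card_window j : #|window j| = k.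
Proof. by apply: card_interval; rewrite addnC -leq_subRL // geq_minr. Qed.

Lemma mem_window_block_of i : i \in window (block_of i).
Proof.
rewrite inE /=.
have := leq_divM i k; have := ltn_ceil i k_gt0; have := ltn_ord i; lia.
Qed.

Lemma INR_block_count_le : INR block_count <= 2 * (INR n / INR k).
Proof.
have k_pos : 0 < INR k by apply/lt_0_INR/ltP.
have : (block_count * k <= 2 * n)%N.
  rewrite /block_count mulnDl mul1n mul2n -addnn leq_add //; exact: leq_divM.
move/leP/le_INR; rewrite !mult_INR [INR 2]/= => le_nk.
apply: (Rmult_le_reg_r _ _ _ k_pos).
rewrite Rmult_assoc /Rdiv Rmult_assoc Rinv_l; lra.
Qed.

End Blocks.

(* Send the [i]-th element of [enum A ++ enum (~: A)] to the [i]-th element of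
   [enum B ++ enum (~: B)]. *)
Lemma exists_perm_imset (T : finType) (A B : {set T}) :
  #|A| = #|B| -> exists s : {perm T}, s @: A = B.
Proof.
move=> AB.
pose sA := enum A ++ enum (~: A); pose sB := enum B ++ enum (~: B).
have mem_sA x : x \in sA by rewrite mem_cat !mem_enum in_setC orbN.
have size_sA : size sA = #|T| by rewrite size_cat -!cardE cardsC.
have size_sB : size sB = #|T| by rewrite size_cat -!cardE cardsC.
have uniq_sB : uniq sB.
  rewrite cat_uniq !enum_uniq andbT /=.
  by apply/hasPn => x; rewrite !mem_enum in_setC.
pose g x := nth x sB (index x sA).
have index_lt x : (index x sA < size sB)%N by rewrite size_sB -size_sA index_mem.
have g_inj : injective g.
  move=> x y; rewrite /g (set_nth_default y x (index_lt x)) => /eqP.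
  rewrite nth_uniq // => /eqP ixy.
  exact: index_inj.
exists (perm g_inj).
apply/eqP; rewrite eqEcard card_imset ?AB ?leqnn ?andbT; last exact: perm_inj.
apply/subsetP => _ /imsetP[x xA ->]; rewrite permE /g /sA index_cat mem_enum xA.
have ixB : (index x (enum A) < size (enum B))%N by rewrite -cardE -AB cardE index_mem mem_enum.
by rewrite nth_cat ixB -mem_enum mem_nth.
Qed.

Section PermAverage.
Variables (T : finType) (U : {set T} -> R).

Definition perm_sum (A : {set T}) : R := \big[Rplus/R0]_(s : {perm T}) U (s @: A).

Lemma perm_sum_card (A B : {set T}) : #|A| = #|B| -> perm_sum A = perm_sum B.
Proof.
move=> /exists_perm_imset[t <-]; rewrite /perm_sum (reindex_inj (mulgI t)).
by apply: eq_bigr => s _; rewrite -imset_comp; congr U; apply: eq_imset => x; rewrite /= permM.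
Qed.

Lemma perm_sum_average k (A : {set T}) : #|A| = k ->
  INR 'C(#|T|, k) * perm_sum A =
  INR #|{perm T}| * \big[Rplus/R0]_(S : {set T} | #|S| == k) U S.
Proof.
move=> cardA; rewrite -card_draws -Rsum_const_pred.
rewrite (eq_bigr (fun S => perm_sum S)); last first.
  by move=> S /eqP cardS; apply: perm_sum_card; rewrite cardA cardS.
rewrite /perm_sum exchange_big -Rsum_const; apply: eq_bigr => s _ /=.
rewrite [RHS](reindex_inj (imset_inj (@perm_inj _ s))) /=.
by apply: eq_bigl => S; rewrite card_imset //; apply: perm_inj.
Qed.

End PermAverage.

Lemma BMW_constant_le (B p q r N : R) : 1 <= p -> 1 <= q -> 0 < N -> N <= 2 * r ->
  rpow B p * Rpower N (p / q - 1) * (2 * rpow 2 p * N) <=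
  rpow 8 p * (rpow B p * Rpower r (p / q)).
Proof.
move=> p_ge1 q_ge1 N_gt0 N_le.
have pq_ge0 : 0 <= p / q by apply: Rle_mult_inv_pos; lra.
have pq_le_p : p / q <= p.
  by apply: (Rmult_le_reg_r q); [lra | rewrite /Rdiv Rmult_assoc Rinv_l; nra].
have rpow2E : rpow 2 p = Rpower 2 p by rewrite rpowE; lra.
have two_le : 2 <= rpow 2 p.
  by rewrite rpow2E -{1}(Rpower_1 2); [apply: Rle_Rpower; lra | lra].
have rpow8E : rpow 8 p = rpow 2 p * (rpow 2 p * rpow 2 p).
  by rewrite -!rpow_mul; try lra; congr rpow; ring.
have NE : Rpower N (p / q - 1) * N = Rpower N (p / q).
  by rewrite -{2}(Rpower_1 N) // -Rpower_plus; congr Rpower; ring.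
have N_pow_le : Rpower N (p / q) <= rpow 2 p * Rpower r (p / q).
  apply: (Rle_trans _ (Rpower (2 * r) (p / q))); first by apply: Rle_Rpower_l; lra.
  rewrite -Rpower_mult_distr; [|lra|lra].
  apply: Rmult_le_compat_r; first exact/Rlt_le/Rpower_gt0.
  by rewrite rpow2E; apply: Rle_Rpower; lra.
have B_ge0 := rpow_ge0 B p; have r_gt0 := Rpower_gt0 r (p / q).
have -> : rpow B p * Rpower N (p / q - 1) * (2 * rpow 2 p * N) =
          rpow B p * Rpower N (p / q) * (2 * rpow 2 p) by rewrite -NE; ring.
apply: (Rle_trans _ (rpow B p * (rpow 2 p * Rpower r (p / q)) * (2 * rpow 2 p))).
  by apply: Rmult_le_compat_r; [lra | apply: Rmult_le_compat_l].
rewrite rpow8E.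
apply: (Rle_trans _ (rpow B p * (rpow 2 p * Rpower r (p / q)) * (rpow 2 p * rpow 2 p))).
  by apply: Rmult_le_compat_l; [apply: Rmult_le_pos; [|apply: Rmult_le_pos] | nra]; lra.
by right; ring.
Qed.

Section MainBound.
Variables (X : Metric_Space) (p q : R) (M n k : nat) (f : 'rV['Z_M]_n -> Base X) (B : R).
Hypotheses (p_ge0 : 0 <= p) (k_gt0 : (0 < k)%N) (k_le_n : (k <= n)%N).
Hypothesis B_adm : BMW_admissible X q p (block_count n k) B.
Local Notation N := (block_count n k).

Lemma sum_two_eps_increment_le_perm (s : {perm 'I_n}) :
  \big[Rplus/R0]_(e : signs n) increment p f (two_eps M e) <=
  rpow B p * Rpower (INR N) (p / q - 1) *
  \big[Rplus/R0]_(j : 'I_N) (2 * rpow 2 p * set_increment p f (s @: window j)).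
Proof.
have [_ bmw] := B_adm.
apply: Rle_trans (sum_two_eps_increment_le f (fun i => block_of k (s^-1%g i)) bmw) _.
apply: Rmult_le_compat_l.
  by apply: Rmult_le_pos; [apply: rpow_ge0 | apply/Rlt_le/Rpower_gt0].
apply: Rsum_le => j _; apply: sum_block_two_eps_increment_le => // i <-.
by rewrite -{1}(permKV s i) imset_f // mem_window_block_of.
Qed.

Lemma sum_two_eps_increment_le_avg :
  \big[Rplus/R0]_(e : signs n) increment p f (two_eps M e) <=
  rpow B p * Rpower (INR N) (p / q - 1) * (2 * rpow 2 p * INR N) *
  (\big[Rplus/R0]_(S : {set 'I_n} | #|S| == k) set_increment p f S / INR 'C(n, k)).
Proof.
set U := \big[Rplus/R0]_(S : {set 'I_n} | #|S| == k) set_increment p f S.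
set P := INR #|{perm 'I_n}|.
have P_gt0 : 0 < P by apply/lt_0_INR/ltP/card_gt0P; exists 1%g.
have C_gt0 : 0 < INR 'C(n, k) by apply/lt_0_INR/ltP; rewrite bin_gt0.
have window_sum (j : 'I_N) : perm_sum (set_increment p f) (window j) = P * U / INR 'C(n, k).
  have := perm_sum_average (set_increment p f) (card_window k_le_n j).
  by rewrite card_ord -/P -/U => avg; field_simplify_eq; [rewrite -avg; ring | lra].
apply: (Rmult_le_reg_l _ _ _ P_gt0); rewrite -Rsum_const.
apply: (Rle_trans _ (\big[Rplus/R0]_(s : {perm 'I_n}) (rpow B p * Rpower (INR N) (p / q - 1) *
  \big[Rplus/R0]_(j : 'I_N) (2 * rpow 2 p * set_increment p f (s @: window j))))).
  by apply: Rsum_le => s _; apply: sum_two_eps_increment_le_perm.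
right; rewrite -Rmult_sumr exchange_big /=.
rewrite (eq_bigr _ (fun j _ => esym (Rmult_sumr _ _ _ _))) /=.
rewrite (eq_bigr (fun=> 2 * rpow 2 p * (P * U / INR 'C(n, k)))); last first.
  by move=> j _; rewrite -(window_sum j).
by rewrite Rsum_const card_ord; field; lra.
Qed.

End MainBound.

Theorem mainTheorem13 :
  exists c : R, Rlt 0 c /\
  forall (X : Metric_Space) (p q : R), Rle 1 p -> Rle 1 q ->
  forall (m n k : nat), (1 <= m)%N -> (1 <= k)%N -> (k <= n)%N ->
  forall (f : 'rV['Z_(8 * m)]_n -> Base X) (B : R),
  BMW_admissible X q p (n %/ k + 1) B ->
  Rle (\rsum_(e : signs n) \rsum_(x : 'rV['Z_(8 * m)]_n)
         rpow (dist X (f (x + two_eps (8 * m) e)%R) (f x)) p)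
      (Rmult (rpow c p)
        (Rmult (Rmult (rpow B p)
                  (Rdiv (Rpower (Rdiv (INR n) (INR k)) (Rdiv p q)) (INR 'C(n, k))))
           (\rsum_(S : {set 'I_n} | #|S| == k) \rsum_(e : signs n)
              \rsum_(x : 'rV['Z_(8 * m)]_n)
                rpow (dist X (f (x + eps_S (8 * m) S e)%R) (f x)) p))).
Proof.
exists 8; split; first lra.
move=> X p q p_ge1 q_ge1 m n k _ k_gt0 k_le_n f B B_adm.
have p_ge0 : 0 <= p by lra.
set U := \big[Rplus/R0]_(S : {set 'I_n} | #|S| == k) set_increment p f S.
have N_gt0 : 0 < INR (block_count n k) by apply/lt_0_INR/ltP; rewrite /block_count addn1.
have ratio_ge0 : 0 <= U / INR 'C(n, k).
  apply: Rle_mult_inv_pos; first by apply: Rsum_ge0 => S _; apply: set_increment_ge0.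
  by apply/lt_0_INR/ltP; rewrite bin_gt0.
apply: Rle_trans (sum_two_eps_increment_le_avg f p_ge0 k_gt0 k_le_n B_adm) _.
rewrite [X in _ <= X](_ : _ =
  rpow 8 p * (rpow B p * Rpower (INR n / INR k) (p / q)) * (U / INR 'C(n, k))).
  apply: Rmult_le_compat_r => //; apply: BMW_constant_le => //.
  exact: INR_block_count_le.
by rewrite /U /set_increment /increment /Rdiv; ring.
Qed.
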